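(* For every integer $n>2$, the finite model $\mathbb{S}^1_n$ of $S^1$ with $2n$ points satisfies $\mathrm{TC}(\mathbb{S}^1_n)\le 3$.
   Context: Finite spaces are finite $T_0$ topological spaces, identified with finite posets: $y\le x$ iff $y$ lies in every open set containing $x$; the minimal open neighborhood of $x$ is $x^\downarrow=\{y: y\le x\}$, and open sets are exactly the down-closed sets. For $n\ge 2$, $\mathbb{S}^1_n=\{x_0,\dots,x_{n-1},y_0,\dots,y_{n-1}\}$ is the finite space whose minimal open sets are $x_i^\downarrow=\{x_i\}$ and $y_i^\downarrow=\{y_i,x_i,x_{i-1 \bmod n}\}$ for $0\le i<n$. Topological complexity is unreduced: for a path-connected space $X$, with $X^I$ the space of paths $[0,1]\to X$ (compact-open topology) and $\pi:X^I\to X\times X$, $\pi(\gamma)=(\gamma(0),\gamma(1))$, $\mathrm{TC}(X)$ is the minimal $k$ such that $X\times X$ is covered by open sets $Q_1,\dots,Q_k$ each admitting a continuous map $s_i:Q_i\to X^I$ with $\pi\circ s_i$ the inclusion. *)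

From Stdlib Require Import Reals List Arith.
Open Scope R_scope.

Definition unitI : Type := {t : R | 0 <= t <= 1}.
Definition I0 : unitI := exist _ 0 (conj (Rle_refl 0) Rle_0_1).
Definition I1 : unitI := exist _ 1 (conj Rle_0_1 (Rle_refl 1)).

Definition openI (V : unitI -> Prop) : Prop :=
  forall t, V t -> exists eps, 0 < eps /\
    forall s : unitI, Rabs (proj1_sig s - proj1_sig t) < eps -> V s.

Definition compactI (K : unitI -> Prop) : Prop :=
  forall (J : Type) (F : J -> unitI -> Prop),
    (forall j, openI (F j)) ->
    (forall t, K t -> exists j, F j t) ->
    exists l : list J, forall t, K t -> exists j, In j l /\ F j t.

(** A space is a carrier T with a predicate [openT] singling out its open sets. *)

Definition cont_path {T : Type} (openT : (T -> Prop) -> Prop) (g : unitI -> T) : Prop :=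
  forall U, openT U -> openI (fun t => U (g t)).

Definition Path (T : Type) (openT : (T -> Prop) -> Prop) : Type :=
  {g : unitI -> T | cont_path openT g}.

Definition co_subbasic {T : Type} (openT : (T -> Prop) -> Prop)
  (K : unitI -> Prop) (U : T -> Prop) (g : Path T openT) : Prop :=
  forall t, K t -> U (proj1_sig g t).

(** Compact-open topology: the topology generated by the subbasis above,
    i.e. unions of finite intersections of subbasic sets. *)
Definition open_CO {T : Type} (openT : (T -> Prop) -> Prop) (W : Path T openT -> Prop) : Prop :=
  forall g, W g -> exists l : list ((unitI -> Prop) * (T -> Prop)),
    (forall KU, In KU l -> compactI (fst KU) /\ openT (snd KU)) /\
    (forall KU, In KU l -> co_subbasic openT (fst KU) (snd KU) g) /\
    (forall h, (forall KU, In KU l -> co_subbasic openT (fst KU) (snd KU) h) -> W h).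

Definition open_prod {T : Type} (openT : (T -> Prop) -> Prop) (W : T * T -> Prop) : Prop :=
  forall p, W p -> exists U V, openT U /\ openT V /\ U (fst p) /\ V (snd p) /\
    forall a b, U a -> V b -> W (a, b).

(** Continuity of s : Q -> X^I, Q carrying the subspace topology of X × X. *)
Definition cont_on {T : Type} (openT : (T -> Prop) -> Prop) (Q : T * T -> Prop)
  (s : {p : T * T | Q p} -> Path T openT) : Prop :=
  forall O, open_CO openT O ->
    exists W, open_prod openT W /\ forall q, O (s q) <-> W (proj1_sig q).

Definition is_section {T : Type} (openT : (T -> Prop) -> Prop) (Q : T * T -> Prop)
  (s : {p : T * T | Q p} -> Path T openT) : Prop :=
  forall q, proj1_sig (s q) I0 = fst (proj1_sig q) /\ proj1_sig (s q) I1 = snd (proj1_sig q).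

Definition mp_cover (T : Type) (openT : (T -> Prop) -> Prop) (k : nat) : Prop :=
  exists (Q : nat -> T * T -> Prop) (s : forall i, {p : T * T | Q i p} -> Path T openT),
    (forall i, (i < k)%nat ->
       open_prod openT (Q i) /\ cont_on openT (Q i) (s i) /\ is_section openT (Q i) (s i)) /\
    (forall p, exists i, (i < k)%nat /\ Q i p).

(** m = TC(X) (unreduced): m is the minimal such k. *)
Definition is_TC (T : Type) (openT : (T -> Prop) -> Prop) (m : nat) : Prop :=
  mp_cover T openT m /\ forall m', mp_cover T openT m' -> (m <= m')%nat.

(** The finite space S^1_n: points (false,i) = x_i and (true,i) = y_i, i < n. *)
Definition S1pt (n : nat) : Type := {p : bool * nat | (snd p < n)%nat}.

(** a ≤ b iff a lies in the minimal open set b^↓: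
    x_i^↓ = {x_i},  y_i^↓ = {y_i, x_i, x_{i-1 mod n}}. *)
Definition S1le (n : nat) (a b : S1pt n) : Prop :=
  let (ba, ia) := proj1_sig a in
  let (bb, ib) := proj1_sig b in
  if bb then (ba = true /\ ia = ib) \/
             (ba = false /\ (ia = ib \/ ia = ((ib + n - 1) mod n)%nat))
  else ba = false /\ ia = ib.

Definition S1open (n : nat) (U : S1pt n -> Prop) : Prop :=
  forall a b, S1le n a b -> U b -> U a.

From Stdlib Require Import Reals List Arith Lia ZArith Lra ProofIrrelevance Classical ClassicalEpsilon.

(* In a finite space, i.e. the Alexandrov topology of a preorder, a sequence
   [v_0 >= v_1 <= v_2 >= ... <= v_2K] of points traversed at speed [1/K], each even point
   occupying an instant and each odd point the open interval between, is a continuous path.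
   A family of such zigzags depending monotonically on its endpoints gives a continuous
   section of the path fibration over any down-closed, hence open, set of pairs.
   Removing the maximal point [y_0] from [S^1_n] leaves the fence
   [x_0 < y_1 > x_1 < ... > x_(n-1)], contractible to [x_0] by such zigzags; this handles the
   pairs avoiding [y_0] and, after a rotation, those avoiding [y_1].  The remaining pairs lie
   below [(y_0, y_1)] or [(y_1, y_0)] and are joined through [x_0], which for [n > 2] is the
   only common lower bound of [y_0] and [y_1]. *)

(** * Zigzag paths in Alexandrov spaces *)

(* [zigzag_index x] is [2 m] at an integer [m] and [2 m - 1] on the open interval [(m - 1, m)]. *)
Definition zigzag_index (x : R) : Z :=
  if Req_dec_T (IZR (up x)) (x + 1) then (2 * (up x - 1))%Z else (2 * up x - 1)%Z.

Lemma zigzag_index_near (x : R) : exists eps, 0 < eps /\ forall y, Rabs (y - x) < eps ->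
  zigzag_index y = zigzag_index x \/
  exists m, zigzag_index x = (2 * m)%Z /\
            (zigzag_index y = 2 * m + 1 \/ zigzag_index y = 2 * m - 1)%Z.
Proof.
  destruct (archimed x) as [Hup1 Hup2].
  destruct (Req_dec_T (IZR (up x)) (x + 1)) as [Hinteger | Hnoninteger].
  - assert (Hx : zigzag_index x = (2 * (up x - 1))%Z).
    { unfold zigzag_index. destruct (Req_dec_T (IZR (up x)) (x + 1)); [reflexivity | contradiction]. }
    rewrite Hx. exists 1. split; [lra |]. intros y Hy. apply Rabs_def2 in Hy as [Hy1 Hy2].
    destruct (Rtotal_order y x) as [Hlt | [-> | Hgt]].
    + right. exists (up x - 1)%Z. split; [reflexivity | right].
      assert (Hupy : up y = (up x - 1)%Z) by (symmetry; apply tech_up; rewrite minus_IZR; lra).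
      unfold zigzag_index. rewrite Hupy.
      destruct (Req_dec_T (IZR (up x - 1)) (y + 1)) as [E | _]; [rewrite minus_IZR in E; lra | lia].
    + left. exact Hx.
    + right. exists (up x - 1)%Z. split; [reflexivity | left].
      assert (Hupy : up y = up x) by (symmetry; apply tech_up; lra).
      unfold zigzag_index. rewrite Hupy.
      destruct (Req_dec_T (IZR (up x)) (y + 1)); [lra | lia].
  - assert (Hup3 : IZR (up x) < x + 1) by (destruct (Rle_lt_or_eq_dec _ _ Hup2); lra).
    set (d := Rmin (IZR (up x) - x) (x + 1 - IZR (up x))).
    assert (Hd1 : d <= IZR (up x) - x) by apply Rmin_l.
    assert (Hd2 : d <= x + 1 - IZR (up x)) by apply Rmin_r.
    exists d. split; [apply Rmin_glb_lt; lra |]. intros y Hy. apply Rabs_def2 in Hy as [Hy1 Hy2].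
    left. assert (Hupy : up y = up x) by (symmetry; apply tech_up; lra).
    unfold zigzag_index. rewrite Hupy.
    destruct (Req_dec_T (IZR (up x)) (y + 1)); [lra |].
    destruct (Req_dec_T (IZR (up x)) (x + 1)); [contradiction | reflexivity].
Qed.

Lemma zigzag_index_0 : zigzag_index 0 = 0%Z.
Proof.
  unfold zigzag_index. replace (up 0) with 1%Z by (apply tech_up; simpl; lra).
  destruct (Req_dec_T (IZR 1) (0 + 1)); [reflexivity | simpl in *; lra].
Qed.

Lemma zigzag_index_INR (K : nat) : zigzag_index (INR K) = (2 * Z.of_nat K)%Z.
Proof.
  unfold zigzag_index.
  assert (HK : IZR (Z.of_nat K + 1) = INR K + 1) by (rewrite plus_IZR, <- INR_IZR_INZ; reflexivity).
  replace (up (INR K)) with (Z.of_nat K + 1)%Z by (apply tech_up; lra).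
  destruct (Req_dec_T (IZR (Z.of_nat K + 1)) (INR K + 1)); [lia | contradiction].
Qed.

Definition zigzag {T : Type} (le : T -> T -> Prop) (v : nat -> T) : Prop :=
  forall j, le (v (2 * j + 1)%nat) (v (2 * j)%nat) /\ le (v (2 * j + 1)%nat) (v (2 * j + 2)%nat).

Lemma zigzag_map {A B : Type} (leA : A -> A -> Prop) (leB : B -> B -> Prop) (f : A -> B) v :
  (forall a b, leA a b -> leB (f a) (f b)) -> zigzag leA v -> zigzag leB (fun i => f (v i)).
Proof. intros Hf Hv j. destruct (Hv j). split; apply Hf; assumption. Qed.

Section Alexandrov.
Variables (T : Type) (le : T -> T -> Prop).
Hypothesis le_refl : forall a, le a a.
Hypothesis le_trans : forall a b c, le a b -> le b c -> le a c.

Definition down_open (U : T -> Prop) : Prop := forall a b, le a b -> U b -> U a.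

Definition zigzag_path (K : nat) (v : nat -> T) (t : unitI) : T :=
  v (Z.to_nat (zigzag_index (proj1_sig t * INR K))).

Lemma zigzag_adjacent v : zigzag le v ->
  forall m w : Z, (w = 2 * m + 1 \/ w = 2 * m - 1)%Z -> le (v (Z.to_nat w)) (v (Z.to_nat (2 * m))).
Proof.
  intros Hv m w Hw. destruct (Z_lt_le_dec m 1) as [Hm | Hm].
  - destruct (Z.eq_dec w 1) as [-> | Hw1].
    + replace (Z.to_nat (2 * m)) with 0%nat by lia. apply (Hv 0%nat).
    + replace (Z.to_nat w) with 0%nat by lia. replace (Z.to_nat (2 * m)) with 0%nat by lia. apply le_refl.
  - destruct Hw as [-> | ->].
    + replace (Z.to_nat (2 * m + 1)) with (2 * Z.to_nat m + 1)%nat by lia.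
      replace (Z.to_nat (2 * m)) with (2 * Z.to_nat m)%nat by lia. apply Hv.
    + replace (Z.to_nat (2 * m - 1)) with (2 * (Z.to_nat m - 1) + 1)%nat by lia.
      replace (Z.to_nat (2 * m)) with (2 * (Z.to_nat m - 1) + 2)%nat by lia. apply Hv.
Qed.

Lemma zigzag_path_continuous K v : (0 < K)%nat -> zigzag le v -> cont_path down_open (zigzag_path K v).
Proof.
  intros HK Hv U HU t Ht.
  assert (HKpos : 0 < INR K) by (apply lt_0_INR; exact HK).
  destruct (zigzag_index_near (proj1_sig t * INR K)) as [eps [Heps Hnear]].
  exists (eps / INR K). split; [apply Rdiv_lt_0_compat; assumption |].
  intros s Hs.
  assert (Hscaled : Rabs (proj1_sig s * INR K - proj1_sig t * INR K) < eps).
  { rewrite <- Rmult_minus_distr_r, Rabs_mult, (Rabs_right (INR K)) by lra.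
    apply Rmult_lt_compat_r with (r := INR K) in Hs; [| exact HKpos].
    unfold Rdiv in Hs. rewrite Rmult_assoc, Rinv_l, Rmult_1_r in Hs by lra. exact Hs. }
  unfold zigzag_path in *. destruct (Hnear _ Hscaled) as [-> | [m [Hm Hw]]]; [exact Ht |].
  rewrite Hm in Ht. exact (HU _ _ (zigzag_adjacent v Hv m _ Hw) Ht).
Qed.

Lemma zigzag_path_0 K v : zigzag_path K v I0 = v 0%nat.
Proof. unfold zigzag_path. simpl. rewrite Rmult_0_l, zigzag_index_0. reflexivity. Qed.

Lemma zigzag_path_1 K v : zigzag_path K v I1 = v (2 * K)%nat.
Proof. unfold zigzag_path. simpl. rewrite Rmult_1_l, zigzag_index_INR. f_equal. lia. Qed.

Record zigzag_planner (Q : T * T -> Prop) (K : nat) (v : T * T -> nat -> T) : Prop := {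
  planner_down_closed : forall p q, Q p -> le (fst q) (fst p) -> le (snd q) (snd p) -> Q q;
  planner_length : (0 < K)%nat;
  planner_zigzag : forall p, Q p -> zigzag le (v p);
  planner_start : forall p, Q p -> v p 0%nat = fst p;
  planner_end : forall p, Q p -> v p (2 * K)%nat = snd p;
  planner_monotone : forall p q, Q p -> le (fst q) (fst p) -> le (snd q) (snd p) ->
    forall i, le (v q i) (v p i) }.

Definition planner_section Q K v (H : zigzag_planner Q K v) (q : {p | Q p}) : Path T down_open :=
  exist _ (zigzag_path K (v (proj1_sig q)))
    (zigzag_path_continuous K _ (planner_length Q K v H) (planner_zigzag Q K v H _ (proj2_sig q))).

Lemma down_open_below c : down_open (fun a => le a c).
Proof. intros a b Hab Hbc. exact (le_trans a b c Hab Hbc). Qed.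

(* Monotonicity in the pair makes the section continuous for the compact-open topology:
   a subbasic condition [g(K) ⊆ U] with [U] down-closed passes to every pair below. *)
Lemma planner_section_spec Q K v (H : zigzag_planner Q K v) :
  open_prod down_open Q /\ cont_on down_open Q (planner_section Q K v H) /\
  is_section down_open Q (planner_section Q K v H).
Proof.
  pose proof (planner_down_closed _ _ _ H) as Hdown.
  pose proof (planner_monotone _ _ _ H) as Hmono.
  split; [| split].
  - intros p Hp. exists (fun a => le a (fst p)), (fun b => le b (snd p)).
    repeat split; try apply down_open_below; try apply le_refl.
    intros a b Ha Hb. exact (Hdown p (a, b) Hp Ha Hb).
  - intros O HO.
    exists (fun p => exists h : Q p, O (planner_section Q K v H (exist _ p h))).
    split.
    + intros p [h Hp]. destruct (HO _ Hp) as [l [Hl_open [Hl_in Hl_sub]]].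
      exists (fun a => le a (fst p)), (fun b => le b (snd p)).
      repeat split; try apply down_open_below; try apply le_refl.
      intros a b Ha Hb. exists (Hdown p (a, b) h Ha Hb). apply Hl_sub.
      intros KU HKU t Ht. apply (proj2 (Hl_open _ HKU) _ (zigzag_path K (v p) t)).
      * apply Hmono; assumption.
      * exact (Hl_in _ HKU t Ht).
    + intros [p h]. split.
      * intros Hp. exists h. exact Hp.
      * intros [h' Hp]. replace h with h' by apply proof_irrelevance. exact Hp.
  - intros [p h]. cbn. rewrite zigzag_path_0, zigzag_path_1.
    split; [apply (planner_start _ _ _ H) | apply (planner_end _ _ _ H)]; exact h.
Qed.

Lemma mp_cover_of_planners (k : nat) (Q : nat -> T * T -> Prop) (K : nat -> nat)
  (v : nat -> T * T -> nat -> T) :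
  (forall i, zigzag_planner (Q i) (K i) (v i)) ->
  (forall p, exists i, (i < k)%nat /\ Q i p) ->
  mp_cover T down_open k.
Proof.
  intros HQ Hcover. exists Q, (fun i => planner_section (Q i) (K i) (v i) (HQ i)).
  split; [intros i _; apply planner_section_spec | exact Hcover].
Qed.

Lemma planner_transport (f g : T -> T) Q K v :
  (forall a b, le a b -> le (f a) (f b)) -> (forall a b, le a b -> le (g a) (g b)) ->
  (forall a, f (g a) = a) -> zigzag_planner Q K v ->
  zigzag_planner (fun p => Q (g (fst p), g (snd p))) K (fun p i => f (v (g (fst p), g (snd p)) i)).
Proof.
  intros Hf Hg Hfg H. split.
  - intros p q Hp H1 H2. apply (planner_down_closed _ _ _ H _ _ Hp); apply Hg; assumption.
  - exact (planner_length _ _ _ H).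
  - intros p Hp. apply (zigzag_map le le f); [exact Hf | exact (planner_zigzag _ _ _ H _ Hp)].
  - intros p Hp. rewrite (planner_start _ _ _ H _ Hp). apply Hfg.
  - intros p Hp. rewrite (planner_end _ _ _ H _ Hp). apply Hfg.
  - intros p q Hp H1 H2 i. apply Hf, (planner_monotone _ _ _ H _ _ Hp); apply Hg; assumption.
Qed.

End Alexandrov.
Arguments zigzag_planner {T} le Q K v.

Lemma is_TC_le (T : Type) (openT : (T -> Prop) -> Prop) (k : nat) :
  mp_cover T openT k -> exists m, is_TC T openT m /\ (m <= k)%nat.
Proof.
  induction k as [k IH] using lt_wf_ind. intros Hk.
  destruct (classic (exists m, (m < k)%nat /\ mp_cover T openT m)) as [[m [Hmk Hm]] | Hmin].
  - destruct (IH m Hmk Hm) as [m' [Hm' Hle]]. exists m'. split; [exact Hm' | lia].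
  - exists k. split; [split; [exact Hk |] | lia].
    intros m' Hm'. destruct (Nat.lt_ge_cases m' k) as [Hlt | Hge]; [| exact Hge].
    exfalso. apply Hmin. exists m'. split; assumption.
Qed.

(** * The fence *)

Local Open Scope nat_scope.

(* The fence [0 < 1 > 2 < 3 > 4 < ...]. *)
Definition fence_le (r s : nat) : Prop :=
  r = s \/ exists k, s = 2 * k + 1 /\ (r = s + 1 \/ r + 1 = s).

Lemma fence_le_refl r : fence_le r r.
Proof. left. reflexivity. Qed.

Lemma fence_le_min_step r c c' k : c = 2 * k + 1 -> c' = c + 1 \/ c' + 1 = c ->
  fence_le (Nat.min r c') (Nat.min r c).
Proof.
  intros Hc Hc'. destruct (Nat.le_gt_cases r c'), (Nat.le_gt_cases r c).
  - left. lia.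
  - right. exists k. lia.
  - right. exists k. lia.
  - right. exists k. lia.
Qed.

Lemma fence_le_min_mono r s c : fence_le r s -> fence_le (Nat.min r c) (Nat.min s c).
Proof.
  intros [-> | [k [Hs Hr]]]; [apply fence_le_refl |].
  destruct (Nat.le_gt_cases s c), (Nat.le_gt_cases r c).
  - right. exists k. lia.
  - left. lia.
  - left. lia.
  - left. lia.
Qed.

Definition fence_path (r s K i : nat) : nat :=
  if i <=? K then Nat.min r (K - i) else Nat.min s (i - K).

Lemma fence_path_zigzag r s h : zigzag fence_le (fence_path r s (2 * h + 1)).
Proof.
  intros j. unfold fence_path.
  destruct (Nat.leb_spec (2 * j + 2) (2 * h + 1)).
  - rewrite !(proj2 (Nat.leb_le _ _)) by lia. split.
    + apply fence_le_min_step with (k := h - j); lia.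
    + apply fence_le_min_step with (k := h - j - 1); lia.
  - destruct (Nat.eq_dec j h) as [-> | Hj].
    + rewrite !(proj2 (Nat.leb_le _ _)) by lia.
      split; [apply fence_le_min_step with (k := 0); lia |].
      replace (Nat.min r _) with (Nat.min s 0) by lia.
      apply fence_le_min_step with (k := 0); lia.
    + rewrite !(proj2 (Nat.leb_gt _ _)) by lia. split.
      * apply fence_le_min_step with (k := j - h - 1); lia.
      * apply fence_le_min_step with (k := j - h); lia.
Qed.

Lemma fence_path_mono r r' s s' K i : fence_le r' r -> fence_le s' s ->
  fence_le (fence_path r' s' K i) (fence_path r s K i).
Proof. intros Hr Hs. unfold fence_path. destruct (i <=? K); apply fence_le_min_mono; assumption. Qed.

Lemma fence_path_start r s K : r <= K -> fence_path r s K 0 = r.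
Proof. intros Hr. unfold fence_path. simpl. lia. Qed.

Lemma fence_path_end r s K : 0 < K -> s <= K -> fence_path r s K (2 * K) = s.
Proof.
  intros HK Hs. unfold fence_path. rewrite (proj2 (Nat.leb_gt _ _)) by lia. lia.
Qed.

(** * The circle [S^1_n] *)

Section Circle.
Variable n : nat.
Hypothesis hn : 2 < n.

Lemma S1pt_eq (a b : S1pt n) : proj1_sig a = proj1_sig b -> a = b.
Proof. destruct a as [p Hp], b as [q Hq]. simpl. intros <-. f_equal. apply le_unique. Qed.

Lemma S1pt_eq_dec (a b : S1pt n) : {a = b} + {a <> b}.
Proof.
  destruct (Bool.bool_dec (fst (proj1_sig a)) (fst (proj1_sig b))) as [Hb | Hb];
    [destruct (Nat.eq_dec (snd (proj1_sig a)) (snd (proj1_sig b))) as [Hi | Hi] |].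
  - left. apply S1pt_eq, injective_projections; assumption.
  - right. intros ->. apply Hi. reflexivity.
  - right. intros ->. apply Hb. reflexivity.
Qed.

Lemma n_neq_0 : n <> 0.
Proof. lia. Qed.

Definition S1mk (b : bool) (i : nat) : S1pt n :=
  exist _ (b, i mod n) (Nat.mod_upper_bound i n n_neq_0).

Lemma S1mk_val b i : i < n -> proj1_sig (S1mk b i) = (b, i).
Proof. intros Hi. simpl. rewrite Nat.mod_small by exact Hi. reflexivity. Qed.

Lemma S1pt_S1mk a b i : proj1_sig a = (b, i) -> a = S1mk b i.
Proof.
  intros Ea. apply S1pt_eq. rewrite Ea, S1mk_val; [reflexivity |].
  pose proof (proj2_sig a) as Ha. simpl in Ha. rewrite Ea in Ha. exact Ha.
Qed.

Lemma pred_mod i : i < n -> (i + n - 1) mod n = if i =? 0 then n - 1 else i - 1.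
Proof.
  intros Hi. destruct i as [| i]; cbn [Nat.eqb].
  - apply Nat.mod_small. lia.
  - replace (S i + n - 1) with (i + 1 * n) by lia.
    rewrite Nat.Div0.mod_add, Nat.mod_small by lia. lia.
Qed.

Lemma S1le_iff (a b : S1pt n) : S1le n a b <->
  let (ba, i) := proj1_sig a in let (bb, j) := proj1_sig b in
  (ba = bb /\ i = j) \/
  (ba = false /\ bb = true /\ (i = j \/ (j = 0 /\ i = n - 1) \/ (1 <= j /\ i = j - 1))).
Proof.
  destruct a as [[ba i] Ha], b as [[bb j] Hb]. unfold S1le. simpl in *.
  rewrite pred_mod by exact Hb.
  destruct ba, bb, (Nat.eqb_spec j 0); split; intros; intuition (try discriminate; lia).
Qed.

Lemma S1le_refl a : S1le n a a.
Proof. apply S1le_iff. destruct (proj1_sig a). left. split; reflexivity. Qed.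

Lemma S1le_trans a b c : S1le n a b -> S1le n b c -> S1le n a c.
Proof.
  rewrite !S1le_iff. destruct (proj1_sig a) as [[] i], (proj1_sig b) as [[] j], (proj1_sig c) as [[] k];
    intuition (try discriminate; lia).
Qed.

Lemma S1le_x_eq a b : fst (proj1_sig b) = false -> S1le n a b -> a = b.
Proof.
  intros Hb Hab. apply S1pt_eq. apply S1le_iff in Hab.
  destruct (proj1_sig a) as [ba i], (proj1_sig b) as [bb j]. simpl in Hb. subst bb.
  destruct Hab as [[-> ->] | [_ [E _]]]; [reflexivity | discriminate].
Qed.

Lemma S1le_y_eq a b : fst (proj1_sig a) = true -> S1le n a b -> b = a.
Proof.
  intros Ha Hab. apply S1pt_eq. apply S1le_iff in Hab.
  destruct (proj1_sig a) as [ba i], (proj1_sig b) as [bb j]. simpl in Ha. subst ba.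
  destruct Hab as [[-> ->] | [E _]]; [reflexivity | discriminate].
Qed.

Definition x0 : S1pt n := S1mk false 0.
Definition y0 : S1pt n := S1mk true 0.
Definition y1 : S1pt n := S1mk true 1.

Definition rot (r : nat) (a : S1pt n) : S1pt n :=
  S1mk (fst (proj1_sig a)) (snd (proj1_sig a) + r).

Lemma rot_mono r a b : S1le n a b -> S1le n (rot r a) (rot r b).
Proof.
  destruct a as [[ba i] Ha], b as [[bb j] Hb]. unfold S1le, rot. simpl.
  assert (Hshift : ((j + n - 1) mod n + r) mod n = ((j + r) mod n + n - 1) mod n).
  { rewrite Nat.Div0.add_mod_idemp_l.
    replace ((j + r) mod n + n - 1) with ((j + r) mod n + (n - 1)) by lia.
    rewrite Nat.Div0.add_mod_idemp_l. f_equal. lia. }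
  destruct bb; intros H.
  - destruct H as [[-> ->] | [-> [-> | ->]]]; [left | right | right]; auto.
  - destruct H as [-> ->]. auto.
Qed.

Lemma rot_1_rot_pred a : rot 1 (rot (n - 1) a) = a.
Proof.
  apply S1pt_eq. destruct a as [[b i] Hi]. unfold rot. simpl in *.
  rewrite Nat.Div0.add_mod_idemp_l. replace (i + (n - 1) + 1) with (i + 1 * n) by lia.
  rewrite Nat.Div0.mod_add, Nat.mod_small by exact Hi. reflexivity.
Qed.

Lemma rot_1_y0 : rot 1 y0 = y1.
Proof.
  unfold rot, y0, y1. rewrite S1mk_val by lia. reflexivity.
Qed.

(* [lpos] and [pt] identify [S1_n] minus [y0] with the fence on [[0, 2n-2]], sending
   [x_i] to [2i] and [y_i] to [2i - 1]; [pt] is clamped so as to be monotone on all of [nat]. *)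
Definition lpos (a : S1pt n) : nat :=
  let (b, i) := proj1_sig a in if b then 2 * i - 1 else 2 * i.

Definition pt (r : nat) : S1pt n :=
  let r' := Nat.min r (2 * n - 2) in S1mk (Nat.odd r') (Nat.div2 (r' + 1)).

Lemma pt_clamp r : pt r = pt (Nat.min r (2 * n - 2)).
Proof. unfold pt. rewrite <- Nat.min_assoc, Nat.min_id. reflexivity. Qed.

Lemma pt_even k : 2 * k <= 2 * n - 2 -> pt (2 * k) = S1mk false k.
Proof. intros Hk. unfold pt. rewrite Nat.min_l, Nat.odd_even, Nat.div2_odd' by exact Hk. reflexivity. Qed.

Lemma pt_odd k : 2 * k + 1 <= 2 * n - 2 -> pt (2 * k + 1) = S1mk true (k + 1).
Proof.
  intros Hk. unfold pt. rewrite Nat.min_l, Nat.odd_odd by exact Hk.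
  replace (2 * k + 1 + 1) with (2 * (k + 1)) by lia. rewrite Nat.div2_double. reflexivity.
Qed.

Lemma pt_mono r s : fence_le r s -> S1le n (pt r) (pt s).
Proof.
  intros Hrs. rewrite (pt_clamp r), (pt_clamp s).
  pose proof (Nat.le_min_r r (2 * n - 2)). pose proof (Nat.le_min_r s (2 * n - 2)).
  destruct (fence_le_min_mono _ _ (2 * n - 2) Hrs) as [-> | [k [Hs Hr]]]; [apply S1le_refl |].
  rewrite Hs, pt_odd by lia. apply S1le_iff. rewrite (S1mk_val true) by lia.
  destruct Hr as [Hr | Hr].
  - replace (Nat.min r (2 * n - 2)) with (2 * (k + 1)) by lia.
    rewrite pt_even, S1mk_val by lia. right. lia.
  - replace (Nat.min r (2 * n - 2)) with (2 * k) by lia.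
    rewrite pt_even, S1mk_val by lia. right. lia.
Qed.

Lemma lpos_bound a : lpos a <= 2 * n - 2.
Proof. destruct a as [[[] i] Hi]; unfold lpos; simpl in *; lia. Qed.

Lemma y_index_pos a i : a <> y0 -> proj1_sig a = (true, i) -> 1 <= i.
Proof. intros Ha Ea. destruct i; [| lia]. exfalso. apply Ha, (S1pt_S1mk _ _ _ Ea). Qed.

Lemma pt_lpos a : a <> y0 -> pt (lpos a) = a.
Proof.
  intros Ha. pose proof (lpos_bound a) as Hbound. unfold lpos in *.
  destruct (proj1_sig a) as [[] i] eqn:Ea; symmetry; rewrite (S1pt_S1mk _ _ _ Ea).
  - pose proof (y_index_pos a i Ha Ea).
    replace (2 * i - 1) with (2 * (i - 1) + 1) in * by lia.
    rewrite pt_odd by exact Hbound. f_equal. lia.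
  - rewrite pt_even by exact Hbound. reflexivity.
Qed.

Lemma lpos_mono a b : b <> y0 -> S1le n a b -> fence_le (lpos a) (lpos b).
Proof.
  intros Hb Hab. apply S1le_iff in Hab. unfold lpos.
  destruct (proj1_sig a) as [ba i], (proj1_sig b) as [bb j] eqn:Eb.
  destruct Hab as [[-> ->] | [-> [-> Hij]]]; [apply fence_le_refl |].
  pose proof (y_index_pos b j Hb Eb). right. exists (j - 1). lia.
Qed.

Definition avoids (c : S1pt n) (p : S1pt n * S1pt n) : Prop := fst p <> c /\ snd p <> c.

Lemma below_ne_y0 a b : S1le n a b -> b <> y0 -> a <> y0.
Proof. intros Hab Hb ->. apply Hb, S1le_y_eq; [reflexivity | exact Hab]. Qed.

Definition fence_plan (p : S1pt n * S1pt n) (i : nat) : S1pt n :=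
  pt (fence_path (lpos (fst p)) (lpos (snd p)) (2 * n - 1) i).

Lemma fence_planner : zigzag_planner (S1le n) (avoids y0) (2 * n - 1) fence_plan.
Proof.
  split.
  - intros p q [Ha Hb] Ha' Hb'. split; eapply below_ne_y0; eassumption.
  - lia.
  - intros p _. apply (zigzag_map fence_le (S1le n) pt); [exact pt_mono |].
    replace (2 * n - 1) with (2 * (n - 1) + 1) by lia. apply fence_path_zigzag.
  - intros p [Ha _]. unfold fence_plan.
    rewrite fence_path_start by (pose proof (lpos_bound (fst p)); lia). apply pt_lpos, Ha.
  - intros p [_ Hb]. unfold fence_plan.
    rewrite fence_path_end by (pose proof (lpos_bound (snd p)); lia). apply pt_lpos, Hb.
  - intros p q [Ha Hb] Ha' Hb' i. apply pt_mono, fence_path_mono; apply lpos_mono; assumption.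
Qed.

Definition rotated_plan (p : S1pt n * S1pt n) (i : nat) : S1pt n :=
  rot 1 (fence_plan (rot (n - 1) (fst p), rot (n - 1) (snd p)) i).

Lemma rotated_planner :
  zigzag_planner (S1le n) (fun p => avoids y0 (rot (n - 1) (fst p), rot (n - 1) (snd p)))
    (2 * n - 1) rotated_plan.
Proof.
  apply planner_transport; [apply rot_mono | apply rot_mono | apply rot_1_rot_pred | apply fence_planner].
Qed.

Lemma rot_pred_ne_y0 a : a <> y1 -> rot (n - 1) a <> y0.
Proof. intros Ha E. apply Ha. rewrite <- rot_1_y0, <- E. symmetry. apply rot_1_rot_pred. Qed.

Lemma x0_le_y0 : S1le n x0 y0.
Proof. apply S1le_iff. unfold x0, y0. rewrite !S1mk_val by lia. right. lia. Qed.

Lemma x0_le_y1 : S1le n x0 y1.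
Proof. apply S1le_iff. unfold x0, y1. rewrite !S1mk_val by lia. right. lia. Qed.

(* This needs [n > 2]: for [n = 2] the point [x_1] also lies below [y0] and [y1]. *)
Lemma below_y0_y1 a : S1le n a y0 -> S1le n a y1 -> a = x0.
Proof.
  rewrite !S1le_iff. unfold y0, y1. rewrite !S1mk_val by lia. intros H0 H1.
  destruct (proj1_sig a) as [b i] eqn:Ea. apply (S1pt_S1mk _ _ _) in Ea. subst a.
  assert (b = false /\ i = 0) as [-> ->] by intuition (try discriminate; lia).
  reflexivity.
Qed.

Definition peak (a c : S1pt n) : S1pt n := if S1pt_eq_dec a x0 then x0 else c.

(* From [a] up to [c], down to [x0], up to [d] and on to [b].  The peaks are skipped at an
   endpoint equal to [x0], so that [(x0, x0)] gets the constant path whichever peaks are used. *)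
Definition detour (a b c d : S1pt n) (i : nat) : S1pt n :=
  match i with
  | 0 | 1 => a
  | 2 => peak a c
  | 3 => x0
  | 4 => peak b d
  | _ => b
  end.

Lemma peak_ge a c : S1le n a c -> S1le n a (peak a c).
Proof. intros H. unfold peak. destruct (S1pt_eq_dec a x0) as [-> |]; [apply S1le_refl | exact H]. Qed.

Lemma x0_le_peak a c : S1le n x0 c -> S1le n x0 (peak a c).
Proof. intros H. unfold peak. destruct (S1pt_eq_dec a x0); [apply S1le_refl | exact H]. Qed.

Lemma peak_mono a a' c : S1le n a' a -> S1le n a c -> S1le n (peak a' c) (peak a c).
Proof.
  intros Ha' Ha. unfold peak.
  destruct (S1pt_eq_dec a x0) as [-> | Hne], (S1pt_eq_dec a' x0) as [-> | Hne'].
  - apply S1le_refl.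
  - apply S1le_x_eq in Ha'; [contradiction | reflexivity].
  - eapply S1le_trans; eassumption.
  - apply S1le_refl.
Qed.

Lemma detour_tail a b c d i : 5 <= i -> detour a b c d i = b.
Proof. intros Hi. do 5 (destruct i as [| i]; [lia |]). reflexivity. Qed.

Lemma detour_zigzag a b c d : S1le n a c -> S1le n b d -> S1le n x0 c -> S1le n x0 d ->
  zigzag (S1le n) (detour a b c d).
Proof.
  intros Hac Hbd Hc Hd j. destruct j as [| [| [| j]]].
  - split; [apply S1le_refl | apply peak_ge, Hac].
  - split; apply x0_le_peak; assumption.
  - split; [apply peak_ge, Hbd | apply S1le_refl].
  - rewrite !detour_tail by lia. split; apply S1le_refl.
Qed.

Lemma detour_mono a b a' b' c d : S1le n a' a -> S1le n b' b -> S1le n a c -> S1le n b d ->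
  forall i, S1le n (detour a' b' c d i) (detour a b c d i).
Proof.
  intros Ha Hb Hac Hbd i.
  destruct i as [| [| [| [| [| i]]]]]; simpl; try apply peak_mono; try assumption; apply S1le_refl.
Qed.

Lemma x0_le_detour a b c d : S1le n x0 a -> S1le n x0 b -> S1le n a c -> S1le n b d ->
  forall i, S1le n x0 (detour a b c d i).
Proof.
  intros Ha Hb Hac Hbd i. destruct i as [| [| [| [| [| i]]]]]; simpl; try assumption.
  - eapply S1le_trans; [exact Ha | apply peak_ge, Hac].
  - apply S1le_refl.
  - eapply S1le_trans; [exact Hb | apply peak_ge, Hbd].
Qed.

Lemma detour_x0 c d i : detour x0 x0 c d i = x0.
Proof.
  unfold detour, peak. destruct (S1pt_eq_dec x0 x0) as [_ | []]; [| reflexivity].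
  destruct i as [| [| [| [| [| i]]]]]; reflexivity.
Qed.

Definition below (c d : S1pt n) (p : S1pt n * S1pt n) : Prop :=
  S1le n (fst p) c /\ S1le n (snd p) d.

Definition crossing (p : S1pt n * S1pt n) : Prop := below y0 y1 p \/ below y1 y0 p.

Definition crossing_plan (p : S1pt n * S1pt n) : nat -> S1pt n :=
  if excluded_middle_informative (below y0 y1 p)
  then detour (fst p) (snd p) y0 y1 else detour (fst p) (snd p) y1 y0.

Lemma below_trans c d p q : below c d p -> S1le n (fst q) (fst p) -> S1le n (snd q) (snd p) ->
  below c d q.
Proof. intros [Ha Hb] Ha' Hb'. split; eapply S1le_trans; eassumption. Qed.

Lemma crossing_planner : zigzag_planner (S1le n) crossing 3 crossing_plan.
Proof.
  pose proof x0_le_y0. pose proof x0_le_y1.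
  split.
  - intros p q [Hp | Hp] Ha Hb; [left | right]; eapply below_trans; eassumption.
  - lia.
  - intros p Hp. unfold crossing_plan.
    destruct (excluded_middle_informative (below y0 y1 p)) as [[Ha Hb] | Hn01].
    + apply detour_zigzag; assumption.
    + destruct Hp as [Hp | [Ha Hb]]; [contradiction | apply detour_zigzag; assumption].
  - intros p _. unfold crossing_plan. destruct (excluded_middle_informative _); reflexivity.
  - intros p _. unfold crossing_plan. destruct (excluded_middle_informative _); reflexivity.
  - intros p q Hp Ha Hb i. unfold crossing_plan.
    destruct (excluded_middle_informative (below y0 y1 p)) as [Hp01 | Hn01],
      (excluded_middle_informative (below y0 y1 q)) as [Hq01 | Hnq01].
    + destruct Hp01. apply detour_mono; assumption.
    + exfalso. apply Hnq01. eapply below_trans; eassumption.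
    + destruct Hp as [Hp | [Ha10 Hb10]]; [contradiction |].
      (* [q] lies below both [(y0, y1)] and [(y1, y0)], hence [q = (x0, x0)] *)
      destruct Hq01 as [Ha01 Hb01].
      assert (Hqa : fst q = x0) by exact (below_y0_y1 _ Ha01 (S1le_trans _ _ _ Ha Ha10)).
      assert (Hqb : snd q = x0) by exact (below_y0_y1 _ (S1le_trans _ _ _ Hb Hb10) Hb01).
      rewrite Hqa, Hqb, detour_x0 in *. apply x0_le_detour; assumption.
    + destruct Hp as [Hp | [Ha10 Hb10]]; [contradiction | apply detour_mono; assumption].
Qed.

Lemma y0_neq_y1 : y0 <> y1.
Proof.
  intros E. apply (f_equal (@proj1_sig _ _)) in E. unfold y0, y1 in E.
  rewrite !S1mk_val in E by lia. discriminate.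
Qed.

Lemma S1_pair_cases a b :
  (a <> y0 /\ b <> y0) \/ (a <> y1 /\ b <> y1) \/ (a = y0 /\ b = y1) \/ (a = y1 /\ b = y0).
Proof.
  pose proof y0_neq_y1.
  destruct (S1pt_eq_dec a y0), (S1pt_eq_dec b y0), (S1pt_eq_dec a y1), (S1pt_eq_dec b y1);
    subst; first [tauto | congruence].
Qed.

Lemma S1_mp_cover : mp_cover (S1pt n) (S1open n) 3.
Proof.
  apply (mp_cover_of_planners (S1pt n) (S1le n) S1le_refl S1le_trans 3
    (fun i => match i with
              | 0 => avoids y0
              | 1 => fun p => avoids y0 (rot (n - 1) (fst p), rot (n - 1) (snd p))
              | _ => crossing end)
    (fun i => match i with 0 | 1 => 2 * n - 1 | _ => 3 end)
    (fun i => match i with 0 => fence_plan | 1 => rotated_plan | _ => crossing_plan end)).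
  - intros [| [| i]]; [exact fence_planner | exact rotated_planner | exact crossing_planner].
  - intros [a b]. destruct (S1_pair_cases a b) as [H | [[Ha Hb] | [[-> ->] | [-> ->]]]].
    + exists 0. split; [lia | exact H].
    + exists 1. split; [lia |]. split; apply rot_pred_ne_y0; assumption.
    + exists 2. split; [lia |]. left. split; apply S1le_refl.
    + exists 2. split; [lia |]. right. split; apply S1le_refl.
Qed.

End Circle.

Theorem theorem1 (n : nat) (hn : (2 < n)%nat) :
  exists m : nat, is_TC (S1pt n) (S1open n) m /\ (m <= 3)%nat.
Proof. exact (is_TC_le _ _ 3 (S1_mp_cover n hn)). Qed.
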